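(* Let $T\in\mathbb{N}_+$, $R\ge1$ and $N>0$ with $(N/R)^{1/T}>4$. Let $\mathcal{Q}$ be the set of sequences $Q=(Q^{(1)},\dots,Q^{(T)})\in\mathbb{R}_+^T$ with $Q^{(1)}\le Q^{(2)}\le\dots\le Q^{(T)}$, $Q^{(1)}\ge R$, and $\sum_{s=1}^TQ^{(s)}\ge N$. For $Q\in\mathcal{Q}$ and $S\subseteq[T]$ define $\phi_Q(\emptyset)=R$ and $\phi_Q(S)=\sum_{s\in S}Q^{(s)}$ for $S\ne\emptyset$. Then $$\inf_{Q\in\mathcal{Q}}\ \sup_{x\in[R,N]}\ \min_{S\subseteq[T]:\ \phi_Q(S)>x}\frac{\phi_Q(S)}{x}\ \ge\ \frac18\Big(\frac{N}{R}\Big)^{1/T},$$ with the convention that a minimum over an empty set is $+\infty$. *)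

From HB Require Import structures.
From mathcomp Require Import all_boot all_order all_algebra.
From mathcomp Require Import all_classical all_reals all_analysis.
Set Implicit Arguments. Unset Strict Implicit. Unset Printing Implicit Defensive.
Import Order.TTheory GRing.Theory Num.Theory.
Local Open Scope ring_scope.
Local Open Scope classical_set_scope.

(* Indices [T] = {1,...,T} are represented by 'I_T = {0,...,T-1};
   Q^{(s)} is Q (s-1). *)

Definition admissibleQ {R : realType} (T : nat) (r N : R) : set ('I_T -> R) :=
  [set Q | (forall s, 0 < Q s)
         /\ (forall s t : 'I_T, (s <= t)%N -> Q s <= Q t)
         /\ (forall s : 'I_T, val s = 0%N -> r <= Q s)
         /\ N <= \sum_(s < T) Q s].

Definition phiQ {R : realType} (T : nat) (r : R) (Q : 'I_T -> R)
  (S : {set 'I_T}) : R :=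
  if S == finset.set0 then r else \sum_(s in S) Q s.

Definition ratioMin {R : realType} (T : nat) (r : R) (Q : 'I_T -> R) (x : R)
  : \bar R :=
  \big[mine/+oo%E]_(S : {set 'I_T} | x < phiQ r Q S) ((phiQ r Q S / x)%:E).

Definition supRatio {R : realType} (T : nat) (r N : R) (Q : 'I_T -> R) : \bar R :=
  ereal_sup [set ratioMin r Q x | x in `[r, N]].

From HB Require Import structures.
From mathcomp Require Import all_boot all_order all_algebra.
From mathcomp Require Import all_classical all_reals all_analysis.
From mathcomp Require Import ring lra.
Set Implicit Arguments. Unset Strict Implicit. Unset Printing Implicit Defensive.
Import Order.TTheory GRing.Theory Num.Theory.
Local Open Scope ring_scope.
Local Open Scope classical_set_scope.

(* Fix an admissible Q and write p_k = phi_Q({1,...,k}) for the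
   k-th prefix sum, with p_0 = phi_Q(emptyset) = r.  Any set S with
   phi_Q(S) > p_k must contain an index s >= k (otherwise S lies inside the
   prefix and has a smaller sum), so by monotonicity phi_Q(S) >= Q^{(k)}; hence
   the ratio at x = p_k is at least Q^{(k)} / p_k.  If the supremum of the
   ratios over [r, N] were below some a >= 0, then Q^{(k)} < a p_k and thus
   p_{k+1} <= p_k + Q^{(k)} < (1 + a) p_k as long as p_k <= N; inductively
   p_T < (1 + a)^T r.  So whenever (1 + a)^T r <= N we get p_T < N <= p_T,
   a contradiction: the supremum is at least a (lemma supRatio_ge).
   The theorem follows with c = (N/r)^{1/T} and a = c/8, since c > 4 gives
   1 + c/8 <= c and c^T r = N. *)

Definition prefix (T k : nat) : {set 'I_T} := [set i : 'I_T | (i < k)%N].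

Section PrefixSums.

Variables (R : realType) (T : nat) (r : R) (Q : 'I_T -> R).
Hypothesis r_gt0 : 0 < r.
Hypothesis Q_ge_r : forall s, r <= Q s.
Hypothesis Q_mono : forall s t : 'I_T, (s <= t)%N -> Q s <= Q t.

Let Q_ge0 s : 0 <= Q s.
Proof. exact: le_trans (ltW r_gt0) (Q_ge_r s). Qed.

Lemma phiQ_ge_member {S : {set 'I_T}} {s : 'I_T} :
  s \in S -> Q s <= phiQ r Q S.
Proof.
move=> sS; rewrite /phiQ; case: eqP => [S0|_]; first by rewrite S0 inE in sS.
by rewrite (bigD1 s) //= lerDl sumr_ge0.
Qed.

Lemma phiQ_ge_r (S : {set 'I_T}) : r <= phiQ r Q S.
Proof.
have [->|/set0Pn[s sS]] := eqVneq S finset.set0; first by rewrite /phiQ eqxx.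
exact: le_trans (Q_ge_r s) (phiQ_ge_member sS).
Qed.

Lemma phiQ_subset (S S' : {set 'I_T}) :
  S != finset.set0 -> S \subset S' -> phiQ r Q S <= phiQ r Q S'.
Proof.
move=> S0 sub; have S'0 : S' != finset.set0.
  by apply: contraNneq S0 => S'0; rewrite -finset.subset0 -S'0.
rewrite /phiQ (negbTE S0) (negbTE S'0) [X in _ <= X](big_setID S) /=.
by rewrite (finset.setIidPr sub) lerDl sumr_ge0.
Qed.

Lemma phiQ_prefix0 : phiQ r Q (prefix T 0) = r.
Proof.
suff -> : prefix T 0 = finset.set0 by rewrite /phiQ eqxx.
by apply/setP => i; rewrite !inE.
Qed.

Lemma phiQ_prefixT : (0 < T)%N -> phiQ r Q (prefix T T) = \sum_(s < T) Q s.
Proof.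
move=> T0; have -> : prefix T T = finset.setT.
  by apply/setP => i; rewrite !inE ltn_ord.
rewrite /phiQ ifN; first by apply: eq_bigl => i; rewrite inE.
by apply/set0Pn; exists (Ordinal T0); rewrite inE.
Qed.

(* Adding the next index to a prefix adds at most Q^{(i)} to phi_Q; the
   inequality is strict only for the empty prefix, whose value r is dropped. *)
Lemma phiQ_prefixS (i : 'I_T) :
  phiQ r Q (prefix T i.+1) <= phiQ r Q (prefix T i) + Q i.
Proof.
have prefixS : prefix T i.+1 = i |: prefix T i.
  by apply/setP => j; rewrite !inE ltnS leq_eqVlt -val_eqE.
have iS : i \in prefix T i.+1 by rewrite inE.
have [i0|i_gt0] := posnP i.
  have p0 : prefix T i = finset.set0 by apply/setP => j; rewrite !inE i0.
  rewrite /phiQ p0 eqxx ifN; last by apply/set0Pn; exists i.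
  by rewrite prefixS p0 finset.setU0 big_set1 lerDr ltW.
have S0 : prefix T i != finset.set0.
  by apply/set0Pn; exists (Ordinal (ltn_trans i_gt0 (ltn_ord i))); rewrite inE.
rewrite /phiQ ifN; last by apply/set0Pn; exists i.
by rewrite (negbTE S0) prefixS big_setU1 ?inE ?ltnn //= addrC.
Qed.

(* Key combinatorial fact: beating a prefix sum costs at least the next
   term, because S must then reach beyond the prefix. *)
Lemma phiQ_gt_prefix (i : 'I_T) (S : {set 'I_T}) :
  phiQ r Q (prefix T i) < phiQ r Q S -> Q i <= phiQ r Q S.
Proof.
move=> lt_pS.
case/boolP: [exists s in S, (i <= s)%N].
  move=> /exists_inP[s sS i_le_s].
  exact: le_trans (Q_mono i_le_s) (phiQ_ge_member sS).
move=> /exists_inPn small.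
have S0 : S != finset.set0.
  apply: contraTneq lt_pS => ->; rewrite -leNgt {1}/phiQ eqxx.
  exact: phiQ_ge_r.
have sub : S \subset prefix T i.
  by apply/fintype.subsetP => s sS; rewrite inE ltnNge small.
by move: lt_pS; rewrite ltNge phiQ_subset.
Qed.

End PrefixSums.

Lemma ratioMin_ge (R : realType) (T : nat) (r : R) (Q : 'I_T -> R) (x y : R) :
  0 < x -> (forall S, x < phiQ r Q S -> y <= phiQ r Q S) ->
  ((y / x)%:E <= ratioMin r Q x)%E.
Proof.
move=> x0 H; rewrite /ratioMin.
elim/big_rec: _ => [|S v HS Hv]; first exact: leey.
by rewrite le_min Hv andbT lee_fin ler_pM2r ?invr_gt0 // H.
Qed.

Lemma supRatio_ge (R : realType) (T : nat) (r N a : R) (Q : 'I_T -> R) :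
  (0 < T)%N -> 0 < r -> 0 <= a -> (1 + a) ^+ T * r <= N ->
  @admissibleQ R T r N Q -> (a%:E <= supRatio r N Q)%E.
Proof.
move=> T0 r0 a0 aTN [_ [Q_mono [Q_r0 QN]]].
have Q_ge_r s : r <= Q s.
  exact: le_trans (Q_r0 (Ordinal T0) erefl) (Q_mono (Ordinal T0) s (leq0n s)).
pose p k := phiQ r Q (prefix T k).
have p_ge_r k : r <= p k by apply: phiQ_ge_r.
rewrite leNgt; apply/negP => sup_lt.
have ratio_lt x : r <= x <= N -> (ratioMin r Q x < a%:E)%E.
  move=> xrN; apply: le_lt_trans sup_lt; apply: ereal_sup_ubound.
  by exists x; rewrite // in_itv.
have growth (i : 'I_T) : p i <= N -> p i.+1 < (1 + a) * p i.
  move=> piN; have pi0 : 0 < p i := lt_le_trans r0 (p_ge_r i).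
  have ratio_i : ((Q i / p i)%:E <= ratioMin r Q (p i))%E.
    by apply: ratioMin_ge => // S; apply: phiQ_gt_prefix.
  have ratio_lt_i : (ratioMin r Q (p i) < a%:E)%E.
    by apply: ratio_lt; rewrite p_ge_r piN.
  have := le_lt_trans ratio_i ratio_lt_i; rewrite lte_fin ltr_pdivrMr // => Qi_lt.
  have := phiQ_prefixS Q r0 i; rewrite -/(p i) -/(p i.+1); lra.
have power_le_N k : (k <= T)%N -> (1 + a) ^+ k * r <= N.
  move=> kT; apply: le_trans aTN; rewrite ler_pM2r //.
  by apply: ler_weXn2l => //; lra.
have step (i : 'I_T) : p i <= (1 + a) ^+ i * r -> p i.+1 < (1 + a) ^+ i.+1 * r.
  move=> bound_i; have piN := le_trans bound_i (power_le_N i (ltnW (ltn_ord i))).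
  apply: lt_le_trans (growth i piN) _.
  by rewrite exprS -mulrA ler_wpM2l //; lra.
have p_le k : (k <= T)%N -> p k <= (1 + a) ^+ k * r.
  elim: k => [_|k IH kT]; first by rewrite /p phiQ_prefix0 // mul1r.
  exact: ltW (step (Ordinal kT) (IH (ltnW kT))).
have lastT : (T.-1 < T)%N by rewrite prednK.
have := step (Ordinal lastT) (p_le _ (leq_pred T)); rewrite /= prednK // => pT_lt.
have pN : N <= p T by rewrite /p phiQ_prefixT.
by have := lt_le_trans pT_lt (le_trans aTN pN); rewrite ltxx.
Qed.

Lemma powR_inv_natK (R : realType) (n : nat) (y : R) :
  (0 < n)%N -> 0 <= y -> (y `^ (n%:R)^-1) ^+ n = y.
Proof.
move=> n0 y0; rewrite -powR_mulrn ?powR_ge0 // -powRrM mulVf ?pnatr_eq0 -?lt0n //.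
exact: powRr1.
Qed.

Theorem mainTheorem13 (R : realType) (T : nat) (r N : R)
  (hT : (0 < T)%N) (hr : 1 <= r) (hN : 0 < N)
  (hNR : 4 < (N / r) `^ (T%:R)^-1) :
  ((8^-1 * (N / r) `^ (T%:R)^-1)%R%:E <=
   ereal_inf [set supRatio r N Q | Q in @admissibleQ R T r N])%E.
Proof.
set c := (N / r) `^ (T%:R)^-1.
have c_gt4 : 4 < c := hNR.
have r0 : 0 < r by apply: lt_le_trans hr.
have cT : c ^+ T = N / r by rewrite powR_inv_natK // divr_ge0 // ltW.
apply: le_ereal_inf_tmp => _ [Q admQ <-].
apply: supRatio_ge => //; first lra.
(* 1 + c/8 <= c, hence (1 + c/8)^T r <= c^T r = N *)
rewrite -ler_pdivlMr // -cT; apply: (lerXn2r T); rewrite ?nnegrE; lra.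
Qed.
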